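(* Let $n>1$ and let $p$ be a probability vector on $[n]$ with all $p_j>0$. If $t_1,\dots,t_{n-1}\ge 0$, then $$\exp\left(-\sum_{j=1}^{n-1} t_j\, e^{(p)}_{(j,j)}\right)\in\langle p\rangle^+ .$$
   Context: $1=(1,\dots,1)^T\in\mathbb{R}^n$; $r_j := p_j/p_n$; $e^{(p)}_{(j,k)} := (e_j - r_j e_n)(e_k^T - e_n^T)$ for $j,k\in[n-1]$, with $\{e_j\}$ the standard basis. $\langle p\rangle^+ := \{P\in M_n(\mathbb{R}) : P1=1,\ P\ge 0 \text{ entrywise},\ pP=p\}$ (row-stochastic matrices with invariant measure $p$). *)

From HB Require Import structures.
From mathcomp Require Import all_boot all_order all_algebra.
From mathcomp Require Import all_classical all_reals all_analysis.
Set Implicit Arguments. Unset Strict Implicit. Unset Printing Implicit Defensive.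
Import Order.TTheory GRing.Theory Num.Theory.
Import numFieldNormedType.Exports.
Local Open Scope classical_set_scope.
Local Open Scope ring_scope.

(* Dimension N = n.+1 (so N > 1 iff 0 < n); the paper's last index "n" is
   ord_max : 'I_n.+1, and the paper's indices j in [N-1] are the j : 'I_n.+1
   different from ord_max. *)

Definition rr (R : realType) (n : nat) (p : 'rV[R]_n.+1) (j : 'I_n.+1) : R :=
  p 0 j / p 0 ord_max.

Definition eP (R : realType) (n : nat) (p : 'rV[R]_n.+1) (j k : 'I_n.+1)
  : 'M[R]_n.+1 :=
  (delta_mx j 0 - rr p j *: delta_mx ord_max 0 : 'cV[R]_n.+1)
  *m (delta_mx 0 k - delta_mx 0 ord_max : 'rV[R]_n.+1).

Definition expmx (R : realType) (n : nat) (A : 'M[R]_n.+1) : 'M[R]_n.+1 :=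
  lim (series (fun k : nat => (k`!%:R)^-1 *: A ^+ k) @ \oo).

Definition pplus (R : realType) (n : nat) (p : 'rV[R]_n.+1) (P : 'M[R]_n.+1)
  : Prop :=
  [/\ P *m const_mx 1 = (const_mx 1 : 'cV[R]_n.+1),
      (forall i j, 0 <= P i j) & p *m P = p].

From HB Require Import structures.
From mathcomp Require Import all_boot all_order all_algebra.
From mathcomp Require Import all_classical all_reals all_analysis.
From mathcomp Require Import ring lra zify.
Import Order.TTheory GRing.Theory Num.Theory.
Import numFieldNormedType.Exports.
Local Open Scope classical_set_scope.
Local Open Scope ring_scope.

(* Write Q := - \sum_(j != n) t_j e^{(p)}_{(j,j)}, the sum ranging over all
   indices except the last one n.  The theorem follows from three properties
   of Q, each transferred to exp(Q):
   - Q 1 = 0 (every e^{(p)}_{(j,j)} kills 1), hence exp(Q) 1 = 1;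
   - p Q = 0 (p e_j - r_j p e_n = 0 by definition of r_j), hence p exp(Q) = p;
   - Q has nonnegative off-diagonal entries (t_j >= 0, r_j >= 0), hence
     exp(Q) is entrywise nonnegative.  The first two transfers hold because every
   partial sum already fixes 1 and p.  For positivity write Q = -c I + B with
   c = |Q|_1 and B >= 0: the partial sums of exp(Q) are Cauchy convolutions of
   the nonnegative null sequence of terms of exp(B) with the partial sums of
   exp(-c) > 0, and such convolutions have a nonnegative limit. *)

Lemma ler_sum_term {R : numDomainType} {I : finType} (F : I -> R) i :
  (forall j, 0 <= F j) -> F i <= \sum_j F j.
Proof. by move=> F_ge0; rewrite (bigD1 i) //= lerDl sumr_ge0. Qed.

Lemma sum_convolution {R : comPzRingType} (a b : nat -> R) K :
  \sum_(0 <= k < K) \sum_(0 <= i < k.+1) a (k - i)%N * b i =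
  \sum_(0 <= i < K) b i * series a (K - i)%N.
Proof.
elim: K => [|K IH]; first by rewrite !big_geq.
have series_last i : (0 <= i < K)%N ->
    b i * series a (K.+1 - i)%N = b i * series a (K - i)%N + a (K - i)%N * b i.
  move=> /andP[_ iK]; rewrite subSn; last exact: ltnW.
  by rewrite seriesSr mulrDr (mulrC (a _)).
rewrite big_nat_recr //= IH !(big_nat_recr K) //= subnn subSnn.
rewrite (eq_big_nat _ _ series_last) big_split /= addrA.
by rewrite /series /= big_nat1 mulrC.
Qed.

(* Convolving a nonnegative null sequence b with a sequence s that is
   eventually positive gives sums that are eventually above any -e < 0: the
   terms with s positive are nonnegative, and the last M terms are small. *)
Lemma convolution_eventually_ge {R : realType} (b s : nat -> R) e :
  (forall i, 0 <= b i) -> b @ \oo --> 0 -> (\forall m \near \oo, 0 < s m) ->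
  0 < e -> \forall K \near \oo, - e <= \sum_(0 <= i < K) b i * s (K - i)%N.
Proof.
move=> b_ge0 b0 [M _ s_pos] e0.
have [E E0 s_le] : exists2 E : R, 0 < E & forall m, (m <= M)%N -> `|s m| <= E.
  exists (1 + \sum_(i < M.+1) `|s i|) => [|m mM]; first by rewrite ltr_wpDr ?sumr_ge0.
  apply: ler_wpDl => //.
  exact: (ler_sum_term (fun i : 'I_M.+1 => `|s i|) (Ordinal (mM : (m < M.+1)%N))).
pose d := e / (M%:R * E + 1).
have ME_gt0 : 0 < M%:R * E + 1 by rewrite ltr_wpDl // mulr_ge0 // ltW.
have d_gt0 : 0 < d by rewrite divr_gt0.
have [I _ b_lt] : \forall i \near \oo, b i < d := cvgr_lt _ b0 d d_gt0.
exists (M + I)%N => // K /= MI_K.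
rewrite (big_cat_nat (n := (K - M)%N)) //=; last exact: leq_subr.
have head_ge0 : 0 <= \sum_(0 <= i < K - M) b i * s (K - i)%N.
  rewrite big_nat_cond sumr_ge0 // => i /andP[/andP[_ iKM] _].
  by rewrite mulr_ge0 // ltW // s_pos //=; lia.
have tail_ge : - (d * E) *+ M <= \sum_(K - M <= i < K) b i * s (K - i)%N.
  have KM : (K - (K - M))%N = M by lia.
  rewrite -{1}KM -sumr_const_nat; apply: ler_sum_nat => i /andP[KM_i iK].
  have b_le : b i <= d by apply/ltW/b_lt => /=; lia.
  have s_le_i : `|s (K - i)%N| <= E by apply: s_le; lia.
  have : `|b i * s (K - i)%N| <= d * E by rewrite normrM ger0_norm // ler_pM.
  by case/ler_normlP; rewrite lerNl.
have : d * E * M%:R <= e.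
  rewrite -[e](divfK (lt0r_neq0 ME_gt0)) -/d mulrDr mulr1.
  by rewrite [M%:R * E]mulrC mulrA lerDl ltW.
move: tail_ge; rewrite mulNrn -mulr_natr; lra.
Qed.

Lemma convolution_lim_ge0 {R : realType} {b s : nat -> R} {l : R} :
  (forall i, 0 <= b i) -> b @ \oo --> 0 -> (\forall m \near \oo, 0 < s m) ->
  (fun K => \sum_(0 <= i < K) b i * s (K - i)%N) @ \oo --> l -> 0 <= l.
Proof.
move=> b_ge0 b0 s_pos conv_l; apply/ler_addgt0Pr => e e0.
rewrite -lerBlDr sub0r; apply: (cvgr_to_ge conv_l).
exact: convolution_eventually_ge.
Qed.

Section ExponentialSeries.
Context {R : realType} {n : nat}.
Implicit Types A B : 'M[R]_n.+1.

Definition exp_term A k : 'M[R]_n.+1 := (k`!%:R)^-1 *: A ^+ k.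

(* The entrywise l1-norm, which bounds the entries of all powers. *)
Definition mx_l1 A : R := \sum_x \sum_y `|A x y|.

Lemma mx_l1_ge0 A : 0 <= mx_l1 A.
Proof. by rewrite sumr_ge0 // => x _; rewrite sumr_ge0. Qed.

Lemma row_l1_le A x : \sum_y `|A x y| <= mx_l1 A.
Proof. by apply: (ler_sum_term (fun x => \sum_y `|A x y|)) => i; rewrite sumr_ge0. Qed.

Lemma entry_le_l1 A x y : `|A x y| <= mx_l1 A.
Proof. exact: le_trans (ler_sum_term (fun y => `|A x y|) y _) (row_l1_le A x). Qed.

Lemma pow_entry_le A k x y : `|(A ^+ k) x y| <= mx_l1 A ^+ k.
Proof.
elim: k x y => [|k IH] x y.
  by rewrite expr0 mxE; case: (x == y); rewrite ?normr1 ?normr0.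
rewrite exprS -mulmxE mxE; apply: le_trans (ler_norm_sum _ _ _) _.
apply: le_trans (_ : \sum_z `|A x z| * mx_l1 A ^+ k <= _).
  by apply: ler_sum => z _; rewrite normrM ler_wpM2l.
by rewrite -mulr_suml exprS ler_wpM2r ?exprn_ge0 ?mx_l1_ge0 ?row_l1_le.
Qed.

Lemma exp_term_entry_le A k x y : `|exp_term A k x y| <= exp_coeff (mx_l1 A) k.
Proof.
rewrite mxE normrM ger0_norm ?invr_ge0 // mulrC /exp_coeff /=.
by rewrite ler_wpM2r ?invr_ge0 // pow_entry_le.
Qed.

Lemma series_exp_term_entry A K x y :
  series (exp_term A) K x y = series (fun k => exp_term A k x y) K.
Proof. by rewrite /series /= summxE. Qed.

Lemma exp_series_entry_cvg A x y : cvgn (series (fun k => exp_term A k x y)).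
Proof.
apply: normed_cvg; apply: (@series_le_cvg _ _ (exp_coeff (mx_l1 A))).
- by move=> k /=.
- by move=> k; exact/exp_coeff_ge0/mx_l1_ge0.
- by move=> k; exact: exp_term_entry_le.
- exact: is_cvg_series_exp_coeff.
Qed.
End ExponentialSeries.

Lemma cvg_mx_entrywise {R : realType} {T : Type} {F : set_system T} {FF : Filter F}
    {m k : nat} {u : T -> 'M[R]_(m, k)} {L : 'M[R]_(m, k)} :
  (forall x y, (fun t => u t x y) @ F --> L x y) -> u @ F --> L.
Proof.
move=> u_cvg A [P P_nbhs P_sub].
have : \forall t \near F, forall xy : 'I_m * 'I_k, P xy.1 xy.2 (u t xy.1 xy.2).
  by apply: filter_forall => -[x y]; exact: u_cvg x y _ (P_nbhs x y).
by apply: filterS => t ut; apply: P_sub => x y; exact: (ut (x, y)).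
Qed.

Lemma expmx_entry_cvg {R : realType} {n : nat} (A : 'M[R]_n.+1) x y :
  (fun K => series (exp_term A) K x y) @ \oo --> expmx A x y.
Proof.
pose L := \matrix_(i, j) limn (series (fun k => exp_term A k i j)).
have partial_cvg i j : (fun K => series (exp_term A) K i j) @ \oo --> L i j.
  rewrite mxE; under eq_cvg do rewrite series_exp_term_entry.
  exact: exp_series_entry_cvg.
have -> : expmx A = L := cvg_lim (@norm_hausdorff _ _) (cvg_mx_entrywise partial_cvg).
exact: partial_cvg.
Qed.

Lemma pow_ge0 {R : realType} {n : nat} (B : 'M[R]_n.+1) :
  (forall x y, 0 <= B x y) -> forall k x y, 0 <= (B ^+ k) x y.
Proof.
move=> B_ge0; elim=> [|k IH] x y; first by rewrite expr0 mxE; case: (x == y).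
by rewrite exprS -mulmxE mxE sumr_ge0 // => z _; rewrite mulr_ge0.
Qed.

Lemma inv_fact_binomial {R : numFieldType} (k i : nat) : (i <= k)%N ->
  (k`!%:R : R)^-1 * ('C(k, i))%:R = ((k - i)`!%:R)^-1 * (i`!%:R)^-1.
Proof.
move=> ik; rewrite -(bin_fact ik) !natrM.
have fact_neq0 m : (m`!%:R : R) != 0 by rewrite pnatr_eq0 -lt0n fact_gt0.
have bin_neq0 : ('C(k, i)%:R : R) != 0 by rewrite pnatr_eq0 -lt0n bin_gt0.
by field; rewrite !fact_neq0 bin_neq0.
Qed.

(* Shifting A by a scalar c multiplies exp(A) by exp(c): the k-th term of
   exp(c I + A) is the k-th term of the Cauchy product of the two series. *)
Lemma exp_term_shift {R : realType} {n : nat} (c : R) (A : 'M[R]_n.+1) k x y :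
  exp_term (c%:M + A) k x y =
  \sum_(0 <= i < k.+1) exp_coeff c (k - i)%N * exp_term A i x y.
Proof.
rewrite /exp_term exprDn_comm; last by rewrite /GRing.comm -!mulmxE scalar_mxC.
rewrite mxE summxE big_mkord mulr_sumr; apply: eq_bigr => i _.
rewrite mulmxnE -mulmxE -rmorphXn mul_scalar_mx !mxE /exp_coeff /=.
rewrite -[_ *+ 'C(k, i)]mulr_natl mulrA inv_fact_binomial; last by rewrite -ltnS.
ring.
Qed.

(* With c := |A|_1 the matrix B := c I + A is nonnegative, and
   the partial sums of exp(A) = exp(-c) exp(B) are convolutions of the
   nonnegative null sequence of terms of exp(B) with the partial sums of
   exp(-c), which converge to exp(-c) > 0. *)
Lemma expmx_ge0 {R : realType} {n : nat} (A : 'M[R]_n.+1) :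
  (forall x y, x != y -> 0 <= A x y) -> forall x y, 0 <= expmx A x y.
Proof.
move=> A_offdiag x y.
pose c := mx_l1 A; pose B := c%:M + A.
have B_ge0 u v : 0 <= B u v.
  rewrite !mxE; case: (eqVneq u v) => [<-|uv]; last by rewrite mulr0n add0r A_offdiag.
  by rewrite mulr1n -lerBlDr sub0r; case/ler_normlP: (entry_le_l1 A u u).
have AE : A = (- c)%:M + B by rewrite /B raddfN /= addKr.
pose b i := exp_term B i x y.
have b_ge0 i : 0 <= b i by rewrite /b mxE mulr_ge0 ?invr_ge0 ?pow_ge0.
have b_null : b @ \oo --> 0.
  apply: (squeeze_cvgr _ (cvg_cst 0) (cvg_exp_coeff (mx_l1 B))).
  apply: nearW => i; rewrite b_ge0 /=.
  exact: le_trans (ler_norm _) (exp_term_entry_le _ _ _ _).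
have s_pos : \forall m \near \oo, 0 < series (exp_coeff (- c)) m.
  exact: cvgr_gt _ (is_cvg_series_exp_coeff (- c)) _ (expR_gt0 (- c)).
apply: (convolution_lim_ge0 b_ge0 b_null s_pos).
suff -> : (fun K => \sum_(0 <= i < K) b i * series (exp_coeff (- c)) (K - i)%N) =
    (fun K => series (exp_term A) K x y) by exact: expmx_entry_cvg.
apply/funext => K; rewrite -sum_convolution series_exp_term_entry /series /=.
by apply: eq_bigr => k _; rewrite {1}AE exp_term_shift.
Qed.

Lemma cvg_mulmx_entry {R : realType} {m1 m2 m3 m4 : nat}
    {S : nat -> 'M[R]_(m2, m3)} {L : 'M[R]_(m2, m3)}
    (u : 'M[R]_(m1, m2)) (v : 'M[R]_(m3, m4)) x z :
  (forall i j, (fun K => S K i j) @ \oo --> L i j) ->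
  (fun K => (u *m S K *m v) x z) @ \oo --> (u *m L *m v) x z.
Proof.
move=> S_cvg; rewrite mxE; under eq_cvg do rewrite mxE.
apply: cvg_big => [|j _]; first exact: add_continuous.
rewrite mxE; under eq_cvg do rewrite mxE.
apply: cvgM; last exact: cvg_cst.
apply: cvg_big => [|i _]; first exact: add_continuous.
by apply: cvgM; [exact: cvg_cst | exact: S_cvg].
Qed.

Lemma expmx_eventually_fixed {R : realType} {n m1 m2 : nat} (A : 'M[R]_n.+1)
    (u : 'M[R]_(m1, n.+1)) (v : 'M[R]_(n.+1, m2)) (w : 'M[R]_(m1, m2)) :
  (\forall K \near \oo, u *m series (exp_term A) K *m v = w) ->
  u *m expmx A *m v = w.
Proof.
move=> ev_w; apply/matrixP => x z.
have to_exp := cvg_mulmx_entry u v x z (expmx_entry_cvg A).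
have to_w : (fun K => (u *m series (exp_term A) K *m v) x z) @ \oo --> w x z.
  by apply: cvg_near_cst; apply: filterS ev_w => K ->.
exact: norm_cvg_unique to_exp to_w.
Qed.

Lemma expmx_sandwich {R : realType} {n m1 m2 : nat} (A : 'M[R]_n.+1)
    (u : 'M[R]_(m1, n.+1)) (v : 'M[R]_(n.+1, m2)) :
  (forall k, u *m A ^+ k.+1 *m v = 0) -> u *m expmx A *m v = u *m v.
Proof.
move=> uAv0; apply: expmx_eventually_fixed; exists 1%N => // -[//|K] _ /=.
rewrite /series /= big_nat_recl // mulmxDr mulmxDl mulmx_sumr mulmx_suml big1 ?addr0.
  by rewrite /exp_term fact0 invr1 scale1r expr0 mulmx1.
by move=> k _; rewrite /exp_term -scalemxAr -scalemxAl uAv0 scaler0.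
Qed.

Section DiagonalGenerators.
Context {R : realType} {n : nat} (p : 'rV[R]_n.+1).
Hypothesis p_pos : forall j, 0 < p 0 j.

Definition diag_generator (t : 'I_n.+1 -> R) : 'M[R]_n.+1 :=
  - \sum_(j | j != ord_max) t j *: eP p j j.

Lemma eP_diag_entry j x y : eP p j j x y =
  ((x == j)%:R - rr p j * (x == ord_max)%:R) * ((y == j)%:R - (y == ord_max)%:R).
Proof. by rewrite /eP mxE big_ord1 !mxE /= !eqxx !andbT. Qed.

Lemma sum_indicator (j : 'I_n.+1) : \sum_y ((y == j)%:R : R) = 1.
Proof. by rewrite (bigD1 j) //= eqxx big1 ?addr0 // => y /negbTE ->. Qed.

Lemma eP_diag_mul1 j : eP p j j *m const_mx 1 = 0 :> 'cV[R]_n.+1.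
Proof.
apply/matrixP => x z; rewrite !mxE.
under eq_bigr do rewrite eP_diag_entry mxE mulr1.
by rewrite -mulr_sumr sumrB !sum_indicator subrr mulr0.
Qed.

(* p e^{(p)}_{(j,j)} = (p_j - r_j p_n) (e_j - e_n)^T = 0. *)
Lemma p_eP_diag j : p *m eP p j j = 0.
Proof.
have pn_neq0 : p 0 ord_max != 0 by rewrite lt0r_neq0.
apply/matrixP => z y; rewrite !mxE.
under eq_bigr do rewrite eP_diag_entry mulrA.
have p_col : \sum_i p z i * ((i == j)%:R - rr p j * (i == ord_max)%:R) = 0.
  under eq_bigr do rewrite mulrBr mulrCA.
  rewrite sumrB -!mulr_sumr.
  rewrite (bigD1 j) //= eqxx mulr1 big1 ?addr0; last by move=> i /negbTE ->; rewrite mulr0.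
  rewrite (bigD1 ord_max) //= eqxx mulr1 big1 ?addr0; last by move=> i /negbTE ->; rewrite mulr0.
  by rewrite !ord1 /rr divfK // subrr.
by rewrite -mulr_suml p_col mul0r.
Qed.

(* For j != n the off-diagonal entries of e^{(p)}_{(j,j)} are nonpositive:
   they are 0, -1 (at (j, n)) or -r_j (at (n, j)). *)
Lemma eP_diag_offdiag_le0 j x y : j != ord_max -> x != y -> eP p j j x y <= 0.
Proof.
move=> jn xy; have rr_ge0 : 0 <= rr p j by rewrite /rr divr_ge0 // ltW.
rewrite eP_diag_entry; case: (eqVneq x j) xy => [-> jy|xj xy].
  by rewrite (negbTE jn) [y == j]eq_sym (negbTE jy) mulr0 subr0 mul1r sub0r oppr_le0.
case: (eqVneq x ord_max) xy => [-> ny|xn _]; last by rewrite mulr0 subrr mul0r.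
by rewrite [y == ord_max]eq_sym (negbTE ny) subr0 mulr1 sub0r mulNr oppr_le0 mulr_ge0.
Qed.

Lemma diag_generator_mul1 t : diag_generator t *m const_mx 1 = 0 :> 'cV[R]_n.+1.
Proof.
rewrite mulNmx mulmx_suml big1 ?oppr0 // => j _.
by rewrite -scalemxAl eP_diag_mul1 scaler0.
Qed.

Lemma p_diag_generator t : p *m diag_generator t = 0.
Proof.
rewrite mulmxN mulmx_sumr big1 ?oppr0 // => j _.
by rewrite -scalemxAr p_eP_diag scaler0.
Qed.

Lemma diag_generator_offdiag t : (forall j, j != ord_max -> 0 <= t j) ->
  forall x y, x != y -> 0 <= diag_generator t x y.
Proof.
move=> t_ge0 x y xy; rewrite mxE summxE oppr_ge0 sumr_le0 // => j jn.
by rewrite mxE mulr_ge0_le0 ?t_ge0 ?eP_diag_offdiag_le0.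
Qed.
End DiagonalGenerators.

Theorem lemma2 (R : realType) (n : nat) (hn : (0 < n)%N)
  (p : 'rV[R]_n.+1)
  (hp_pos : forall j, 0 < p 0 j) (hp_sum : \sum_j p 0 j = 1)
  (t : 'I_n.+1 -> R) (ht : forall j, j != ord_max -> 0 <= t j) :
  pplus p (expmx (- \sum_(j | j != ord_max) t j *: eP p j j)).
Proof.
rewrite -/(diag_generator p t); split.
- rewrite -[expmx _]mul1mx expmx_sandwich ?mul1mx // => k.
  by rewrite mul1mx exprSr -mulmxE -mulmxA diag_generator_mul1 mulmx0.
- exact: expmx_ge0 (diag_generator_offdiag _ hp_pos _ ht).
- rewrite -[LHS]mulmx1 expmx_sandwich ?mulmx1 // => k.
  by rewrite mulmx1 exprS -mulmxE mulmxA (p_diag_generator _ hp_pos) mul0mx.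
Qed.
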